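(* Let $p\ge 1$, $\alpha\in(0,1)$, $\varepsilon>0$ and $g\in\mathbb{R}^p$ with $g\neq 0$. Let $m$ be an index with $|g_m|=\max_d|g_d|$ and let $I_{12}$ be the $p\times p$ diagonal matrix with $(I_{12})_{dd}=1$ if $|g_d|\ge \alpha|g_m|$ and $0$ otherwise. Let $q_1:=\left(\|I_{12}g\|_1/\|I_{12}g\|_2\right)^2$ and $$c_{\alpha,\varepsilon}(q_1):=\left(\frac{\sqrt{2\alpha\sqrt{q_1(\alpha^2q_1 + 4\varepsilon(1-\alpha))} + q_1((1-\alpha)^3-2\alpha^2)} - (1-\alpha)\sqrt{q_1(1-\alpha)}}{\alpha\sqrt{4\varepsilon(1-\alpha)}}\right)^2.$$ If $$\Delta x_{12,c,\varepsilon}:=-I_{12}g\left(\frac{\alpha\, c_{\alpha,\varepsilon}(q_1)\,\varepsilon}{\|I_{12}g\|_1}+\frac{(1-\alpha)\sqrt{c_{\alpha,\varepsilon}(q_1)\,\varepsilon}}{\|I_{12}g\|_2}\right),$$ then $h_\alpha(\Delta x_{12,c,\varepsilon})=\varepsilon$, where $h_\alpha(v):=\alpha\|v\|_1+(1-\alpha)\|v\|_2^2$.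
   Context: $\varepsilon$ is the step size in the general stagewise procedure; $I_{12}$ selects the coordinates whose absolute gradient is at least $\alpha$ times the maximal absolute gradient. *)

From mathcomp Require Import all_boot all_order all_algebra.
Set Implicit Arguments. Unset Strict Implicit. Unset Printing Implicit Defensive.
Import Order.TTheory GRing.Theory Num.Theory.
Local Open Scope ring_scope.

Definition norm1 (R : rcfType) (p : nat) (v : 'I_p -> R) : R := \sum_(i < p) `|v i|.
Definition norm2 (R : rcfType) (p : nat) (v : 'I_p -> R) : R :=
  Num.sqrt (\sum_(i < p) v i ^+ 2).

(* I_12 g : diagonal 0/1 matrix applied to g; entry d kept iff |g_d| >= alpha |g_m| *)
Definition I12g (R : rcfType) (p : nat) (alpha : R) (g : 'I_p -> R) (m : 'I_p)
  : 'I_p -> R :=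
  fun d => if alpha * `|g m| <= `|g d| then g d else 0.

Definition c_ae (R : rcfType) (alpha eps q1 : R) : R :=
  ((Num.sqrt (2 * alpha * Num.sqrt (q1 * (alpha ^+ 2 * q1 + 4 * eps * (1 - alpha)))
              + q1 * ((1 - alpha) ^+ 3 - 2 * alpha ^+ 2))
    - (1 - alpha) * Num.sqrt (q1 * (1 - alpha)))
   / (alpha * Num.sqrt (4 * eps * (1 - alpha)))) ^+ 2.

Definition h_alpha (R : rcfType) (p : nat) (alpha : R) (v : 'I_p -> R) : R :=
  alpha * norm1 v + (1 - alpha) * norm2 v ^+ 2.

(** The step is [- t * I12g] with [t = alpha c eps / N1 + (1 - alpha) sqrt(c eps) / N2],
    where [N1], [N2] are the l1 and l2 norms of [I12g]; hence [h_alpha] of the step is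
    [alpha t N1 + (1 - alpha) t^2 N2^2], a quadratic in [w := t N1] whose coefficients
    depend only on [r := N1 / N2] (so [q1 = r^2]).  The formula for [c] comes from
    solving two quadratics in turn: [w] ([step_l1]) is the positive root of
    [(1 - alpha) w^2 + alpha r^2 w = eps r^2], which makes [h_alpha] equal to [eps],
    and [u := sqrt(c eps)] ([c_root]) is the positive root of
    [alpha u^2 + (1 - alpha) r u = w], which makes [t N1] equal to [w]. *)
From mathcomp Require Import all_boot all_order all_algebra.
From mathcomp Require Import ring.
Import Order.TTheory GRing.Theory Num.Theory.
Local Open Scope ring_scope.

Section HAlphaStep.
Context {R : rcfType}.

Definition quad_root (A B C : R) : R :=
  (Num.sqrt (B ^+ 2 + 4 * A * C) - B) / (2 * A).

Lemma quad_rootP (A B C : R) : A != 0 -> 0 <= B ^+ 2 + 4 * A * C ->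
  A * quad_root A B C ^+ 2 + B * quad_root A B C = C.
Proof.
move=> A_neq0 disc_ge0; rewrite /quad_root.
set s := Num.sqrt _; have s2 : s ^+ 2 = B ^+ 2 + 4 * A * C by rewrite sqr_sqrtr.
have -> : A * ((s - B) / (2 * A)) ^+ 2 + B * ((s - B) / (2 * A))
          = (s ^+ 2 - B ^+ 2) / (4 * A) by field.
by rewrite s2; field.
Qed.

Lemma quad_root_ge0 (A B C : R) : 0 < A -> 0 <= C -> 0 <= quad_root A B C.
Proof.
move=> A_gt0 C_ge0; apply: divr_ge0; last by rewrite mulr_ge0 ?ltW.
rewrite subr_ge0; apply: le_trans (ler_norm B) _.
by rewrite -sqrtr_sqr ler_wsqrtr // lerDl !mulr_ge0 // ltW.
Qed.

Section StepSize.
Variables a e r : R.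
Hypotheses (a_gt0 : 0 < a) (a_lt1 : a < 1) (e_gt0 : 0 < e) (r_ge0 : 0 <= r).

Definition step_l1 : R := quad_root (1 - a) (a * r ^+ 2) (e * r ^+ 2).
Definition c_root : R := quad_root a ((1 - a) * r) step_l1.

Let b_gt0 : 0 < 1 - a. Proof. by rewrite subr_gt0. Qed.

Lemma step_l1_ge0 : 0 <= step_l1.
Proof. by rewrite quad_root_ge0 // mulr_ge0 ?sqr_ge0 ?ltW. Qed.

Lemma step_l1P : (1 - a) * step_l1 ^+ 2 + a * r ^+ 2 * step_l1 = e * r ^+ 2.
Proof.
apply: quad_rootP; first by rewrite gt_eqF.
by rewrite addr_ge0 ?sqr_ge0 // mulr_ge0 ?mulr_ge0 ?sqr_ge0 // ltW.
Qed.

Lemma c_root_ge0 : 0 <= c_root.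
Proof. exact: quad_root_ge0 step_l1_ge0. Qed.

Lemma c_rootP : a * c_root ^+ 2 + (1 - a) * r * c_root = step_l1.
Proof.
apply: quad_rootP; first by rewrite gt_eqF.
by rewrite addr_ge0 ?sqr_ge0 // mulr_ge0 ?step_l1_ge0 // mulr_ge0 // ltW.
Qed.

Lemma c_ae_mul_eps : c_ae a e (r ^+ 2) * e = c_root ^+ 2.
Proof.
set b := 1 - a; set w := step_l1; set k := Num.sqrt b; set s4 := Num.sqrt (4 * e).
have k_gt0 : 0 < k by rewrite sqrtr_gt0.
have s4_gt0 : 0 < s4 by rewrite sqrtr_gt0 mulr_gt0.
have s4_sq : s4 ^+ 2 = 4 * e by rewrite sqr_sqrtr // mulr_ge0 ?ltW.
have outer_root : Num.sqrt (r ^+ 2 * (a ^+ 2 * r ^+ 2 + 4 * e * b)) = 2 * b * w + a * r ^+ 2.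
  rewrite /w /step_l1 /quad_root -/b.
  have -> : r ^+ 2 * (a ^+ 2 * r ^+ 2 + 4 * e * b)
            = (a * r ^+ 2) ^+ 2 + 4 * b * (e * r ^+ 2) by ring.
  by field; rewrite gt_eqF.
have inner_root : Num.sqrt (2 * a * (2 * b * w + a * r ^+ 2) + r ^+ 2 * (b ^+ 3 - 2 * a ^+ 2))
                  = k * (2 * a * c_root + b * r).
  rewrite /c_root /quad_root -/b -/w.
  have -> : 2 * a * (2 * b * w + a * r ^+ 2) + r ^+ 2 * (b ^+ 3 - 2 * a ^+ 2)
            = b * ((b * r) ^+ 2 + 4 * a * w) by ring.
  by rewrite sqrtrM ?ltW //; congr (_ * _); field; rewrite gt_eqF.
rewrite /c_ae -/b outer_root inner_root.
rewrite [Num.sqrt (_ * b)]sqrtrM ?sqr_ge0 // sqrtr_sqr ger0_norm //.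
rewrite [Num.sqrt (4 * e * b)]sqrtrM ?mulr_ge0 ?ltW // -/k -/s4.
have -> : ((k * (2 * a * c_root + b * r) - b * (r * k)) / (a * (s4 * k))) ^+ 2 * e
          = (2 * c_root) ^+ 2 / s4 ^+ 2 * e by field; rewrite !gt_eqF.
by rewrite s4_sq; field; rewrite gt_eqF.
Qed.

End StepSize.

Section Norms.
Context {p : nat}.
Implicit Types v w : 'I_p -> R.

Lemma eq_h_alpha (a : R) v w : v =1 w -> h_alpha a v = h_alpha a w.
Proof.
move=> vw; rewrite /h_alpha /norm1 /norm2.
by congr (_ * _ + _ * Num.sqrt _ ^+ 2); apply: eq_bigr => i _; rewrite vw.
Qed.

Lemma norm1Z (s : R) v : norm1 (fun i => s * v i) = `|s| * norm1 v.
Proof. by rewrite /norm1 mulr_sumr; apply: eq_bigr => i _; rewrite normrM. Qed.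

Lemma norm2Z (s : R) v : norm2 (fun i => s * v i) = `|s| * norm2 v.
Proof.
rewrite /norm2 -sqrtr_sqr -sqrtrM ?sqr_ge0 // mulr_sumr.
by congr Num.sqrt; apply: eq_bigr => i _; rewrite exprMn.
Qed.

Lemma h_alphaZ (a s : R) v :
  h_alpha a (fun i => s * v i) = a * (`|s| * norm1 v) + (1 - a) * (s ^+ 2 * norm2 v ^+ 2).
Proof. by rewrite /h_alpha norm1Z norm2Z exprMn real_normK ?num_real. Qed.

Lemma norm1_gt0 v i : v i != 0 -> 0 < norm1 v.
Proof.
move=> vi_neq0; rewrite /norm1 (bigD1 i) //= ltr_wpDr ?normr_gt0 //.
by rewrite sumr_ge0.
Qed.

Lemma norm2_gt0 v i : v i != 0 -> 0 < norm2 v.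
Proof.
move=> vi_neq0; rewrite /norm2 sqrtr_gt0 (bigD1 i) //= ltr_wpDr //.
  by rewrite sumr_ge0 // => j _; rewrite sqr_ge0.
by rewrite exprn_even_gt0.
Qed.

Lemma I12g_max (a : R) (g : 'I_p -> R) (m : 'I_p) : a <= 1 -> I12g a g m m = g m.
Proof. by move=> a_le1; rewrite /I12g ler_piMl. Qed.

Lemma h_alpha_step (a e : R) v : 0 < a -> a < 1 -> 0 < e -> 0 < norm1 v -> 0 < norm2 v ->
  let c := c_ae a e ((norm1 v / norm2 v) ^+ 2) in
  h_alpha a (fun d => - v d * (a * c * e / norm1 v + (1 - a) * Num.sqrt (c * e) / norm2 v))
  = e.
Proof.
move=> a_gt0 a_lt1 e_gt0 N1_gt0 N2_gt0 c.
set t := _ + _; set r := norm1 v / norm2 v; set w := step_l1 a e r.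
have r_gt0 : 0 < r by rewrite divr_gt0.
have sqrt_ce : Num.sqrt (c * e) = c_root a e r.
  by rewrite c_ae_mul_eps ?ltW // sqrtr_sqr ger0_norm // c_root_ge0 ?ltW.
have tN1 : t * norm1 v = w.
  rewrite /t sqrt_ce -(mulrA a c e) c_ae_mul_eps ?ltW // /r /w -c_rootP ?ltW //.
  by rewrite /r; set u := c_root _ _ _; field; rewrite !gt_eqF.
have tN2 : t * norm2 v = w / r by rewrite -tN1 /r; field; rewrite !gt_eqF.
have t_ge0 : 0 <= t.
  have N1_neq0 : norm1 v != 0 by rewrite gt_eqF.
  by rewrite -(mulfK N1_neq0 t) tN1 divr_ge0 ?step_l1_ge0 ?ltW.
rewrite (eq_h_alpha _ _ (fun d => - t * v d)); last by move=> d /=; rewrite !mulNr mulrC.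
rewrite h_alphaZ normrN sqrrN ger0_norm // -exprMn tN1 tN2.
apply: (@mulIf _ (r ^+ 2)); first by rewrite expf_neq0 // gt_eqF.
rewrite -(step_l1P a e r) ?ltW // -/w.
by field; rewrite gt_eqF.
Qed.

End Norms.

End HAlphaStep.

Theorem theorem4 (R : rcfType) (p : nat) (alpha eps : R) (g : 'I_p -> R) (m : 'I_p) :
  (1 <= p)%N ->
  0 < alpha -> alpha < 1 -> 0 < eps ->
  (exists d, g d != 0) ->
  (forall d, `|g d| <= `|g m|) ->
  let v := I12g alpha g m in
  let q1 := (norm1 v / norm2 v) ^+ 2 in
  let c := c_ae alpha eps q1 in
  let dx := fun d => - v d * (alpha * c * eps / norm1 v
                              + (1 - alpha) * Num.sqrt (c * eps) / norm2 v) in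
  h_alpha alpha dx = eps.
Proof.
move=> _ alpha_gt0 alpha_lt1 eps_gt0 [d gd_neq0] g_max v q1 c dx.
have gm_neq0 : g m != 0 by rewrite -normr_gt0 (lt_le_trans _ (g_max d)) ?normr_gt0.
have vm_neq0 : v m != 0 by rewrite /v I12g_max ?ltW.
exact (h_alpha_step alpha eps v alpha_gt0 alpha_lt1 eps_gt0
  (norm1_gt0 v m vm_neq0) (norm2_gt0 v m vm_neq0)).
Qed.
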